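(* Let $N=\{1,\dots,n\}$ be a set of agents, $m>0$ a capacity, $\tau\ge 0$ and $g\ge 0$ fees, and for each $i\in N$ let $V_i:\mathbb{R}_+\to\mathbb{R}$ be strictly concave and differentiable with $V_i'(0)=\infty$ and $C_i:\mathbb{R}_+\to\mathbb{R}$ convex, differentiable and Lipschitz continuous. Let $U_i(x_i;\mu)=V_i(x_i)-C_i(x_i)-(\tau+\mu)x_i-g\,\mathbf{1}\{x_i>0\}$, $BR_i(\mu)=\arg\max_{x_i\ge 0}U_i(x_i;\mu)$ and $S(\mu)=\sum_{i=1}^nBR_i(\mu)$. If each $U_i$ is strictly concave in $x_i$, then the contract-clearing equilibrium $(\mathbf{x}^\star,\mu^\star)$ is unique.
   Context: A contract-clearing equilibrium is a pair $(\mathbf{x}^\star,\mu^\star)$ with $\mathbf{x}^\star\in\mathbb{R}_+^n$ and $\mu^\star\ge 0$ such that $x_i^\star=BR_i(\mu^\star)$ for all $i\in N$ and $S(\mu^\star)=\sum_i x_i^\star=m$. $\tau$ is a per-unit transaction fee, $g$ a fixed execution fee charged when $x_i>0$, and $\mu$ a shadow price enforcing capacity. *)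

From Stdlib Require Import Reals Lra.
From Coquelicot Require Import Coquelicot.
Open Scope R_scope.

(* Agents are indexed by 0, ..., n-1 (i.e. N = {1,...,n} shifted). *)
Fixpoint sum_agents (n : nat) (f : nat -> R) : R :=
  match n with
  | O => 0
  | S k => sum_agents k f + f k
  end.

Definition strictly_concave_Rplus (f : R -> R) : Prop :=
  forall x y t, 0 <= x -> 0 <= y -> x <> y -> 0 < t < 1 ->
    t * f x + (1 - t) * f y < f (t * x + (1 - t) * y).

Definition convex_Rplus (f : R -> R) : Prop :=
  forall x y t, 0 <= x -> 0 <= y -> 0 <= t <= 1 ->
    f (t * x + (1 - t) * y) <= t * f x + (1 - t) * f y.

Definition lipschitz_Rplus (f : R -> R) : Prop :=
  exists L, forall x y, 0 <= x -> 0 <= y -> Rabs (f x - f y) <= L * Rabs (x - y).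

Definition differentiable_Rplus (f : R -> R) : Prop :=
  (forall x, 0 < x -> ex_derive f x) /\
  (exists l : R, filterlim (fun h => (f h - f 0) / h) (at_right 0) (locally l)).

Definition ind_pos (x : R) : R := if Rlt_dec 0 x then 1 else 0.

Definition utility (V C : R -> R) (tau g mu x : R) : R :=
  V x - C x - (tau + mu) * x - g * ind_pos x.

Definition is_best_response (V C : R -> R) (tau g mu x : R) : Prop :=
  0 <= x /\ forall y, 0 <= y -> utility V C tau g mu y <= utility V C tau g mu x.

Definition contract_clearing_equilibrium (n : nat) (V C : nat -> R -> R)
    (tau g m : R) (x : nat -> R) (mu : R) : Prop :=
  0 <= mu /\
  (forall i, (i < n)%nat -> is_best_response (V i) (C i) tau g mu (x i)) /\
  sum_agents n x = m.

(* Revealed preference makes every best response nonincreasing in the shadow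
   price. If two equilibria had prices mu1 < mu2, the allocation at mu2 would
   be pointwise below the one at mu1 while both sum to m > 0, so they agree at
   every agent, and some agent buys a positive quantity x. At an interior
   optimum the fixed fee g is a constant, so the first-order condition
   V'(x) - C'(x) = tau + mu holds at both prices, forcing mu1 = mu2. With the
   price fixed, strict concavity of U_i makes each best response unique. *)
From Stdlib Require Import Reals Lra Lia.
From Coquelicot Require Import Coquelicot.
Open Scope R_scope.

Lemma sum_agents_le (n : nat) (a b : nat -> R) :
  (forall i, (i < n)%nat -> a i <= b i) -> sum_agents n a <= sum_agents n b.
Proof.
  induction n as [|n IH]; intros Hab; simpl; [lra|].
  assert (a n <= b n) by (apply Hab; lia).
  assert (sum_agents n a <= sum_agents n b) by (apply IH; intros; apply Hab; lia).
  lra.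
Qed.

Lemma sum_agents_le_eq (n : nat) (a b : nat -> R) :
  (forall i, (i < n)%nat -> a i <= b i) -> sum_agents n a = sum_agents n b ->
  forall i, (i < n)%nat -> a i = b i.
Proof.
  induction n as [|n IH]; intros Hab Hsum i Hi; simpl in Hsum; [lia|].
  assert (Hab' : forall j, (j < n)%nat -> a j <= b j) by (intros; apply Hab; lia).
  assert (Hs := sum_agents_le n a b Hab').
  assert (a n <= b n) by (apply Hab; lia).
  destruct (Nat.eq_dec i n) as [->|Hne]; [lra|].
  apply IH; [exact Hab' | lra | lia].
Qed.

Lemma sum_agents_pos (n : nat) (x : nat -> R) :
  0 < sum_agents n x -> exists i, (i < n)%nat /\ 0 < x i.
Proof.
  induction n as [|n IH]; simpl; intros H; [lra|].
  destruct (Rlt_dec 0 (x n)) as [Hp|Hp].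
  - exists n; split; [lia | exact Hp].
  - destruct IH as [i [Hi Hx]]; [lra|].
    exists i; split; [lia | exact Hx].
Qed.

Lemma is_derive_local_max (f : R -> R) (a b x d : R) :
  a < x < b -> is_derive f x d -> (forall y, a < y < b -> f y <= f x) -> d = 0.
Proof.
  intros Hx Hd Hmax.
  apply is_derive_Reals in Hd.
  pose (pr := exist (fun l => derivable_pt_lim f x l) d Hd : derivable_pt f x).
  rewrite <- (derive_pt_eq_0 f x d pr Hd).
  apply (deriv_maximum f a b x pr); try lra.
  intros y Hay Hyb; apply Hmax; lra.
Qed.

Lemma utility_pos (V C : R -> R) (tau g mu x : R) : 0 < x ->
  utility V C tau g mu x = V x - C x - (tau + mu) * x - g.
Proof.
  intros Hx; unfold utility, ind_pos.
  destruct (Rlt_dec 0 x); [ring | lra].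
Qed.

Lemma best_response_antitone (V C : R -> R) (tau g mu1 mu2 x1 x2 : R) :
  is_best_response V C tau g mu1 x1 -> is_best_response V C tau g mu2 x2 ->
  mu1 < mu2 -> x2 <= x1.
Proof.
  intros [Hx1 B1] [Hx2 B2] Hlt.
  specialize (B1 x2 Hx2); specialize (B2 x1 Hx1); unfold utility in *.
  nra.
Qed.

Lemma best_response_foc (V C : R -> R) (tau g mu x : R) :
  is_best_response V C tau g mu x -> 0 < x -> ex_derive V x -> ex_derive C x ->
  Derive V x - Derive C x = tau + mu.
Proof.
  intros [_ Hmax] Hx HV HC.
  set (W := fun y => V y - C y - (tau + mu) * y).
  assert (HW : is_derive W x (Derive V x - Derive C x - (tau + mu) * 1)).
  { apply (is_derive_minus (fun y => V y - C y) (fun y => (tau + mu) * y)).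
    - apply (is_derive_minus V C); apply Derive_correct; assumption.
    - apply (is_derive_scal (fun y => y)), (is_derive_id (K := R_AbsRing)). }
  assert (Hd : Derive V x - Derive C x - (tau + mu) * 1 = 0).
  { apply (is_derive_local_max W 0 (2 * x) x); [lra | exact HW |].
    intros y Hy; specialize (Hmax y ltac:(lra)).
    rewrite !utility_pos in Hmax by lra.
    unfold W; lra. }
  lra.
Qed.

Lemma best_response_pos_price_eq (V C : R -> R) (tau g mu1 mu2 x : R) :
  is_best_response V C tau g mu1 x -> is_best_response V C tau g mu2 x ->
  0 < x -> ex_derive V x -> ex_derive C x -> mu1 = mu2.
Proof.
  intros B1 B2 Hx HV HC.
  pose proof (best_response_foc V C tau g mu1 x B1 Hx HV HC).
  pose proof (best_response_foc V C tau g mu2 x B2 Hx HV HC).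
  lra.
Qed.

Lemma best_response_unique (V C : R -> R) (tau g mu x1 x2 : R) :
  strictly_concave_Rplus (fun x => utility V C tau g mu x) ->
  is_best_response V C tau g mu x1 -> is_best_response V C tau g mu x2 -> x1 = x2.
Proof.
  intros Hconc [Hx1 B1] [Hx2 B2].
  destruct (Req_dec x1 x2) as [Heq|Hne]; [exact Heq | exfalso].
  specialize (Hconc x1 x2 (/ 2) Hx1 Hx2 Hne ltac:(lra)); simpl in Hconc.
  specialize (B1 (/ 2 * x1 + (1 - / 2) * x2) ltac:(lra)).
  specialize (B2 x1 Hx1).
  lra.
Qed.

Section ClearingPrice.

Variables (n : nat) (m tau g : R) (V C : nat -> R -> R).
Hypothesis Hm : 0 < m.
Hypothesis HVdiff : forall i, (i < n)%nat -> forall x, 0 < x -> ex_derive (V i) x.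
Hypothesis HCdiff : forall i, (i < n)%nat -> forall x, 0 < x -> ex_derive (C i) x.

Lemma clearing_price_not_lt (x1 x2 : nat -> R) (mu1 mu2 : R) :
  contract_clearing_equilibrium n V C tau g m x1 mu1 ->
  contract_clearing_equilibrium n V C tau g m x2 mu2 -> ~ mu1 < mu2.
Proof.
  intros [_ [B1 S1]] [_ [B2 S2]] Hlt.
  assert (Hle : forall i, (i < n)%nat -> x2 i <= x1 i)
    by (intros i Hi; exact (best_response_antitone _ _ _ _ _ _ _ _ (B1 i Hi) (B2 i Hi) Hlt)).
  assert (Heq := sum_agents_le_eq n x2 x1 Hle ltac:(lra)).
  destruct (sum_agents_pos n x1 ltac:(lra)) as [i [Hi Hpos]].
  assert (B2i := B2 i Hi); rewrite (Heq i Hi) in B2i.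
  assert (mu1 = mu2)
    by exact (best_response_pos_price_eq _ _ _ _ _ _ _ (B1 i Hi) B2i Hpos
                (HVdiff i Hi _ Hpos) (HCdiff i Hi _ Hpos)).
  lra.
Qed.

Lemma clearing_price_unique (x1 x2 : nat -> R) (mu1 mu2 : R) :
  contract_clearing_equilibrium n V C tau g m x1 mu1 ->
  contract_clearing_equilibrium n V C tau g m x2 mu2 -> mu1 = mu2.
Proof.
  intros E1 E2.
  destruct (Rtotal_order mu1 mu2) as [Hlt|[Heq|Hgt]]; [exfalso | exact Heq | exfalso].
  - exact (clearing_price_not_lt x1 x2 mu1 mu2 E1 E2 Hlt).
  - exact (clearing_price_not_lt x2 x1 mu2 mu1 E2 E1 Hgt).
Qed.

End ClearingPrice.

Theorem theorem4p7 (n : nat) (m tau g : R) (V C : nat -> R -> R)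
  (Hn : (0 < n)%nat) (Hm : 0 < m) (Htau : 0 <= tau) (Hg : 0 <= g)
  (HVconc : forall i, (i < n)%nat -> strictly_concave_Rplus (V i))
  (HVdiff : forall i, (i < n)%nat -> forall x, 0 < x -> ex_derive (V i) x)
  (HVinada : forall i, (i < n)%nat ->
     filterlim (fun x => Derive (V i) x) (at_right 0) (Rbar_locally p_infty))
  (HCconv : forall i, (i < n)%nat -> convex_Rplus (C i))
  (HCdiff : forall i, (i < n)%nat -> differentiable_Rplus (C i))
  (HClip : forall i, (i < n)%nat -> lipschitz_Rplus (C i))
  (HUconc : forall i, (i < n)%nat -> forall mu, 0 <= mu ->
     strictly_concave_Rplus (fun x => utility (V i) (C i) tau g mu x)) :
  forall (x1 x2 : nat -> R) (mu1 mu2 : R),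
    contract_clearing_equilibrium n V C tau g m x1 mu1 ->
    contract_clearing_equilibrium n V C tau g m x2 mu2 ->
    mu1 = mu2 /\ (forall i, (i < n)%nat -> x1 i = x2 i).
Proof.
  intros x1 x2 mu1 mu2 E1 E2.
  assert (HCdiff_pos : forall i, (i < n)%nat -> forall x, 0 < x -> ex_derive (C i) x)
    by (intros i Hi; exact (proj1 (HCdiff i Hi))).
  assert (Hmu := clearing_price_unique n m tau g V C Hm HVdiff HCdiff_pos x1 x2 mu1 mu2 E1 E2).
  subst mu2; split; [reflexivity |].
  destruct E1 as [Hmu1 [B1 _]], E2 as [_ [B2 _]].
  intros i Hi.
  exact (best_response_unique _ _ _ _ _ _ _ (HUconc i Hi mu1 Hmu1) (B1 i Hi) (B2 i Hi)).
Qed.
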